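(* Let $n\geq 2$, $p\geq 1$, and $$\Omega=\{(x',x_n)\in\mathbb R^{n-1}\times\mathbb R: |x'|<1,\ 0<x_n<1-|x'|^2\}.$$ Then there is a constant $C>0$ depending only on $n,p$ such that the function $$w(x',x_n)=Cx_n-Cx_n^{\frac{2}{n+p}}(1-|x'|^2)^{\frac{n+p-2}{n+p}}$$ is smooth and convex in $\Omega$ and satisfies $\det D^2 w\leq |w|^{-p}$ in $\Omega$ and $w=0$ on $\partial\Omega$. *)

From HB Require Import structures.
From mathcomp Require Import all_boot all_order all_algebra.
From mathcomp Require Import all_classical all_reals all_analysis.
Set Implicit Arguments. Unset Strict Implicit. Unset Printing Implicit Defensive.
Import Order.TTheory GRing.Theory Num.Theory.
Import numFieldNormedType.Exports.
Local Open Scope classical_set_scope.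
Local Open Scope ring_scope.

(* Points of R^n are row vectors x : 'rV[R]_n, written x = (x', x_n) with
   x' = first n-1 coordinates and x_n the last coordinate. *)

Definition xlast (R : realType) (n : nat) (x : 'rV[R]_n) : R :=
  \sum_(i < n | ((i : nat) == n.-1)%N) x ord0 i.

Definition sqnorm' (R : realType) (n : nat) (x : 'rV[R]_n) : R :=
  \sum_(i < n | ((i : nat) < n.-1)%N) x ord0 i ^+ 2.

Definition Omega (R : realType) (n : nat) : set 'rV[R]_n :=
  [set x | sqnorm' x < 1 /\ 0 < xlast x /\ xlast x < 1 - sqnorm' x].

Definition bdry (R : realType) (n : nat) (A : set 'rV[R]_n) : set 'rV[R]_n :=
  closure A `\` interior A.

Definition wfun (R : realType) (n : nat) (p C : R) (x : 'rV[R]_n) : R :=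
  C * xlast x
  - C * (xlast x `^ (2 / (n%:R + p)))
      * ((1 - sqnorm' x) `^ ((n%:R + p - 2) / (n%:R + p))).

Definition iterD (R : realType) (n : nat) (vs : seq 'rV[R]_n)
  (f : 'rV[R]_n -> R) : 'rV[R]_n -> R :=
  foldr (fun v g => 'D_v g) f vs.

Definition smooth_on (R : realType) (n : nat) (A : set 'rV[R]_n)
  (f : 'rV[R]_n -> R) : Prop :=
  forall vs : seq 'rV[R]_n, forall x, A x -> differentiable (iterD vs f) x.

Definition convex_on (R : realType) (n : nat) (A : set 'rV[R]_n)
  (f : 'rV[R]_n -> R) : Prop :=
  forall x y (t : R), A x -> A y -> 0 <= t <= 1 ->
    f (t *: x + (1 - t) *: y) <= t * f x + (1 - t) * f y.

Definition evec (R : realType) (n : nat) (i : 'I_n) : 'rV[R]_n :=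
  delta_mx ord0 i.

Definition hessian (R : realType) (n : nat) (f : 'rV[R]_n -> R)
  (x : 'rV[R]_n) : 'M[R]_n :=
  \matrix_(i < n, j < n) ('D_(evec R i) ('D_(evec R j) f)) x.

From HB Require Import structures.
From mathcomp Require Import all_boot all_order all_algebra.
From mathcomp Require Import all_classical all_reals all_analysis.
From mathcomp.algebra_tactics Require Import ring lra.
Import Order.TTheory GRing.Theory Num.Theory.
Import numFieldNormedType.Exports.
Local Open Scope classical_set_scope.
Local Open Scope ring_scope.

(* Write t = x_n, s = 1 - |x'|^2, a = 2/(n+p) and b = (n+p-2)/(n+p), so that
   a + b = 1 and w = C t - C Q with Q = t^a s^b.
   The coordinates, t^a and s^b generate an algebra of functions on the open set
   Omega that is stable under directional derivatives, hence w is smooth.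
   Q is the weighted geometric mean of the positive concave functions t and s, so
   it is concave (weighted AM-GM bounds it by its tangent planes) and w is convex.
   D^2 w = C Q (a b l l^T + (2 b / s) P), where l is the gradient of log (t / s)
   and P the projection onto the x' coordinates; as l_n = 1/t this gives
   det D^2 w = (2 b C Q / s)^(n-1) a b C Q / t^2.
   On Omega 0 < t < Q, so 0 < |w| <= C Q, and Q^(n+p) = t^2 s^(n+p-2) turns
   det D^2 w (C Q)^p into C^(n-1) C^p s^(p-1) C (2b)^(n-1) a b, which is at most 1
   when C (1 + (2b)^(n-1) a b) = 1, because s <= 1 <= p.
   On the boundary either t = 0 or t = s, and w vanishes in both cases. *)

Section DifferentiableDerive.
Context {R : realType} {V : normedModType R}.
Implicit Types (f g h : V -> R) (x v : V).

Lemma near0_differentiable h x : (\forall y \near x, h y = 0) ->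
  differentiable h x.
Proof.
move=> h0; have hx : h x = 0 := nbhs_singleton h0.
have h0x : \forall y \near (0 : V), h (x + y) = 0.
  exact: (nbhs0P (fun y => h y = 0) x).1 h0.
have hE : h \o shift x = cst (h x) + \0 +o_ (0 : V) id.
  apply/eqaddoP => e e0; near=> y.
  rewrite /= hx addr0 subr0 [X in `|X|]/=.
  have -> : h (y + x) = 0 by rewrite addrC; near: y.
  by rewrite normr0 mulr_ge0 // ltW.
have d0 : 'd h x = \0 :> (V -> R).
  by apply: diff_unique => //; exact: cst_continuous.
by apply/diff_locallyP; rewrite d0; split => //; exact: cst_continuous.
Unshelve. all: by end_near. Qed.

Lemma near_eq_differentiable f g x : (\forall y \near x, f y = g y) ->
  differentiable f x -> differentiable g x.
Proof.
move=> fg df; have -> : g = f + (g - f) by apply/funext => y /=; rewrite addrC subrK.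
apply: differentiableD => //; apply: near0_differentiable.
near=> y; have -> : (g - f) y = g y - f y by [].
by rewrite (near fg y) // subrr.
Unshelve. all: by end_near. Qed.

Definition is_dderive x v f (d : R) := differentiable f x /\ 'D_v f x = d.

Lemma is_dderive_eq {x v f g d e} : is_dderive x v f d -> f =1 g -> d = e ->
  is_dderive x v g e.
Proof. by move=> fd /funext <- <-. Qed.

Lemma is_dderive_cst x v (c : R) : is_dderive x v (fun=> c) 0.
Proof. by split; [exact: differentiable_cst | exact: derive_cst]. Qed.

Lemma is_dderiveD {x v f g d e} : is_dderive x v f d -> is_dderive x v g e ->
  is_dderive x v (fun y => f y + g y) (d + e).
Proof.
move=> [df <-] [dg <-]; split; first exact: differentiableD.
by rewrite (deriveD (diff_derivable df) (diff_derivable dg)).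
Qed.

Lemma is_dderiveM {x v f g d e} : is_dderive x v f d -> is_dderive x v g e ->
  is_dderive x v (fun y => f y * g y) (f x * e + g x * d).
Proof.
move=> [df <-] [dg <-]; split; first exact: differentiableM.
by rewrite (deriveM (diff_derivable df) (diff_derivable dg)).
Qed.

Lemma is_dderive_powR (c : R) {x v f d} : is_dderive x v f d -> 0 < f x ->
  is_dderive x v (fun y => f y `^ c) (c * f x `^ (c - 1) * d).
Proof.
move=> [df <-] fx0.
have dpow : differentiable (@powR R ^~ c) (f x).
  by apply/derivable1_diffP; have [] := is_derive1_powR c fx0.
have dcomp : differentiable ((@powR R ^~ c) \o f) x by exact: differentiable_comp.
split => //; rewrite -[fun y => _]/((@powR R ^~ c) \o f).
rewrite deriveE // diff_comp //= diff1E // powR_derive1 ?in_itv /= ?fx0 //.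
by rewrite (deriveE v df); exact: mulrC.
Qed.

Lemma is_dderive_sum {I : Type} (r : seq I) (P : pred I) {F : I -> V -> R}
    {d : I -> R} {x v} :
  (forall i, P i -> is_dderive x v (F i) (d i)) ->
  is_dderive x v (fun y => \sum_(i <- r | P i) F i y) (\sum_(i <- r | P i) d i).
Proof.
move=> dF; elim: r => [|i r IH].
  by apply: (is_dderive_eq (is_dderive_cst x v 0)) => [y|]; rewrite big_nil.
have [Pi|nPi] := boolP (P i).
  by apply: (is_dderive_eq (is_dderiveD (dF i Pi) IH)) => [y|]; rewrite big_cons Pi.
by apply: (is_dderive_eq IH) => [y|]; rewrite big_cons (negbTE nPi).
Qed.

End DifferentiableDerive.

Section GeometricMean.
Context {R : realType}.
Implicit Types a b l t s u v T S : R.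

Lemma powRB1 t s : 0 < t -> t `^ (s - 1) = t `^ s / t.
Proof.
move=> t0; rewrite powRB ?powRr1 ?ltW //.
by apply/implyP => _; rewrite gt_eqF.
Qed.

Lemma powR_ile1 t r : 0 < t <= 1 -> 0 <= r -> t `^ r <= 1.
Proof. by move=> t01 r0; rewrite -(powRr0 t); exact: ger_powR. Qed.

Lemma weighted_amgm a b u v : 0 < a -> 0 < b -> a + b = 1 -> 0 <= u -> 0 <= v ->
  u `^ a * v `^ b <= a * u + b * v.
Proof.
move=> a0 b0 ab u0 v0.
have := @conjugate_powR _ (u `^ a) (v `^ b) a^-1 b^-1 (powR_ge0 _ _) (powR_ge0 _ _).
rewrite !invr_gt0 !invrK => /(_ a0 b0 ab).
by rewrite -!powRrM !mulfV ?gt_eqF // !powRr1 // [_ * a]mulrC [_ * b]mulrC.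
Qed.

Lemma geomean_le_tangent a b u v T S : 0 < a -> 0 < b -> a + b = 1 ->
  0 <= u -> 0 <= v -> 0 < T -> 0 < S ->
  u `^ a * v `^ b <= T `^ a * S `^ b * (a * (u / T) + b * (v / S)).
Proof.
move=> a0 b0 ab u0 v0 T0 S0.
have -> : u `^ a * v `^ b = T `^ a * S `^ b * ((u / T) `^ a * (v / S) `^ b).
  rewrite mulrACA -(powRM _ (ltW T0)) ?divr_ge0 ?(ltW T0) //.
  rewrite -(powRM _ (ltW S0)) ?divr_ge0 ?(ltW S0) //.
  by rewrite [T * _]mulrC [S * _]mulrC !divfK ?gt_eqF.
apply: ler_wpM2l; first by rewrite mulr_ge0 ?powR_ge0.
by apply: weighted_amgm => //; apply: divr_ge0 => //; apply: ltW.
Qed.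

Lemma convex_comb_gt0 {l u v} : 0 <= l <= 1 -> 0 < u -> 0 < v ->
  0 < l * u + (1 - l) * v.
Proof. by move=> /andP[l0 l1] u0 v0; nra. Qed.

Lemma geomean_concave {a b l u1 v1 u2 v2} : 0 < a -> 0 < b -> a + b = 1 ->
  0 <= l <= 1 -> 0 < u1 -> 0 < v1 -> 0 < u2 -> 0 < v2 ->
  l * (u1 `^ a * v1 `^ b) + (1 - l) * (u2 `^ a * v2 `^ b) <=
  (l * u1 + (1 - l) * u2) `^ a * (l * v1 + (1 - l) * v2) `^ b.
Proof.
move=> a0 b0 ab l01 u10 v10 u20 v20.
have /andP[l0 l1] := l01; have l1' : 0 <= 1 - l by rewrite subr_ge0.
set T := l * u1 + (1 - l) * u2; set S := l * v1 + (1 - l) * v2.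
have T0 : 0 < T := convex_comb_gt0 l01 u10 u20.
have S0 : 0 < S := convex_comb_gt0 l01 v10 v20.
have tangent u v : 0 < u -> 0 < v -> u `^ a * v `^ b <=
    T `^ a * S `^ b * (a * (u / T) + b * (v / S)).
  by move=> u0 v0; apply: geomean_le_tangent => //; exact: ltW.
apply: le_trans (lerD (ler_wpM2l l0 (tangent _ _ u10 v10))
  (ler_wpM2l l1' (tangent _ _ u20 v20))) _.
rewrite le_eqVlt; apply/predU1P; left.
rewrite /T /S in T0 S0 *; rewrite -[b](addKr a) ab.
by field; rewrite !gt_eqF.
Qed.

Lemma geomean_pow_sum {k : nat} {p a b t s : R} : 0 <= p -> 0 < t -> 0 < s ->
  a * (k.+1%:R + p) = 2 -> b * (k.+1%:R + p) = k%:R + (p - 1) ->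
  (t `^ a * s `^ b) ^+ k.+1 * (t `^ a * s `^ b) `^ p =
  t ^+ 2 * (s ^+ k * s `^ (p - 1)).
Proof.
move=> p0 t0 s0 aN bN.
have Q0 : t `^ a * s `^ b != 0 by rewrite mulf_neq0 // gt_eqF // powR_gt0.
rewrite -powR_mulrn ?mulr_ge0 ?powR_ge0 // -powRD; last by rewrite Q0 implybT.
rewrite powRM ?powR_ge0 // -!powRrM aN bN -(powR_mulrn 2 (ltW t0)).
by rewrite (@powRD _ s k%:R) ?(gt_eqF s0) ?implybT // (powR_mulrn k (ltW s0)).
Qed.

End GeometricMean.

Lemma det_rank1_add_pid (F : fieldType) (k : nat) (c d : F) (u : 'rV[F]_k.+1) :
  \det (c *: (u^T *m u) + d *: pid_mx k) = d ^+ k * c * u 0 ord_max ^+ 2.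
Proof.
set M := _ + _.
have lt_max (i : 'I_k.+1) : (i < k)%N = (i != ord_max).
  by rewrite -val_eqE /= ltn_neqAle -ltnS ltn_ord andbT.
have ME i j : M i j = c * u 0 i * u 0 j + d * ((i == j) && (i != ord_max))%:R.
  by rewrite !mxE big_ord1 !mxE lt_max mulrA.
have [umax0|umax] := eqVneq (u 0 ord_max) 0.
  rewrite umax0 expr0n mulr0 (expand_det_row _ ord_max) big1 // => j _.
  by rewrite ME umax0 eqxx andbF !mulr0 mul0r add0r mul0r.
(* M = E *m T, where E^T and T are upper triangular and E has a unit diagonal. *)
pose E := \matrix_(i, j) ((i == j)%:R +
   ((j == ord_max) && (i != ord_max))%:R * (u 0 i / u 0 ord_max)) : 'M[F]_k.+1.
pose T := \matrix_(i, j) (if i == ord_max then c * u 0 ord_max * u 0 j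
   else d * (i == j)%:R) : 'M[F]_k.+1.
have -> : M = E *m T.
  apply/matrixP => i j; rewrite ME !mxE (bigD1 i) //= !mxE eqxx /=.
  have [->|im] := eqVneq i ord_max.
    rewrite /= andbF mulr0 addr0 mul0r addr0 mul1r big1 ?addr0 // => l li.
    by rewrite !mxE eq_sym (negbTE li) eqxx andbF /= ?mul0r ?add0r ?mul0r.
  rewrite /= andbT mul0r addr0 mul1r (bigD1 ord_max) /=; last by rewrite eq_sym.
  rewrite !mxE eqxx /= im (negbTE im) /= add0r mul1r big1 ?addr0; last first.
    move=> l /andP[li lm]; rewrite !mxE eq_sym (negbTE li) (negbTE lm) /=.
    by rewrite add0r !mul0r.
  by rewrite [d * _ + _]addrC; congr (_ + _); field.
have below_max (i j : 'I_k.+1) : (i < j)%N -> i != ord_max.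
  by move=> ij; rewrite -lt_max (leq_trans ij) // -ltnS.
have trigEt : is_trig_mx E^T.
  apply/is_trig_mxP => i j ij; rewrite !mxE -val_eqE /= gtn_eqF //.
  by rewrite (negbTE (below_max _ _ ij)) /= add0r mul0r.
have trigT : is_trig_mx T.
  apply/is_trig_mxP => i j ij; rewrite !mxE.
  by rewrite (negbTE (below_max _ _ ij)) -val_eqE /= ltn_eqF // mulr0.
rewrite det_mulmx -det_tr !det_trig // big1 ?mul1r => [|i _]; last first.
  by rewrite !mxE eqxx andbN mul0r addr0.
rewrite big_ord_recr /= !mxE eqxx (eq_bigr (fun=> d)) => [|i _]; last first.
  by rewrite !mxE eqxx mulr1 -val_eqE /= ltn_eqF.
by rewrite prodr_const card_ord expr2 !mulrA.
Qed.

Section OmegaCalculus.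
Context {R : realType} {m : nat}.
Local Notation V := 'rV[R]_m.+1.
Local Notation Omega := (@Omega R m.+1).
Implicit Types (x y u v : V) (f g : V -> R).

Definition dot' x y := \sum_(i < m.+1 | (i < m)%N) x ord0 i * y ord0 i.

Lemma xlastE x : xlast x = x ord0 ord_max.
Proof. by rewrite /xlast (big_pred1 ord_max) // => i /=; rewrite -val_eqE. Qed.

Lemma is_dderive_coord x v i : is_dderive x v (fun y : V => y ord0 i) (v ord0 i).
Proof.
have lin_coord (a : R) y z : (a *: y + z) ord0 i = a * y ord0 i + z ord0 i.
  by rewrite !mxE.
pose f : {linear V -> R} :=
  HB.pack (fun y : V => y ord0 i) (GRing.isLinear.Build R V R *:%R _ lin_coord).
have cf : continuous f := @coord_continuous R 1 m.+1 ord0 i.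
have df : differentiable f x := differentiable_coord _ ord0 i.
by split => //; rewrite (deriveE v df) (diff_lin x cf).
Qed.

Lemma is_dderive_xlast x v : is_dderive x v (@xlast R m.+1) (xlast v).
Proof.
by apply: (is_dderive_eq (is_dderive_coord x v ord_max)) => [y|]; rewrite xlastE.
Qed.

Lemma is_dderive_dot'l x u v : is_dderive x u (dot'^~ v) (dot' u v).
Proof.
apply: (is_dderive_eq (is_dderive_sum (index_enum 'I_m.+1) (fun i => (i < m)%N)
  (fun i _ => is_dderiveM (is_dderive_coord x u i) (is_dderive_cst x u (v ord0 i)))))
  => //.
by apply: eq_bigr => i _; rewrite mulr0 add0r mulrC.
Qed.

Lemma is_dderive_one_sub_sqnorm' x v :
  is_dderive x v (fun y => 1 - sqnorm' y) (- (2 * dot' x v)).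
Proof.
have dsq := is_dderive_sum (index_enum 'I_m.+1) (fun i : 'I_m.+1 => (i < m)%N)
  (fun i _ => is_dderiveM (is_dderive_coord x v i) (is_dderive_coord x v i)).
apply: (is_dderive_eq (is_dderiveD (is_dderive_cst x v 1)
  (is_dderiveM (is_dderive_cst x v (-1)) dsq))) => [y|].
  by rewrite /sqnorm' mulN1r; congr (_ - _); apply: eq_bigr => i _; rewrite expr2.
rewrite add0r mulr0 addr0 mulN1r mulr_sumr; congr (- _).
by apply: eq_bigr => i _; rewrite mulr2n mulrDl mul1r.
Qed.

Lemma sqnorm'_ge0 x : 0 <= sqnorm' x.
Proof. by rewrite sumr_ge0 // => i _; rewrite sqr_ge0. Qed.

Lemma Omega_xlast_gt0 {x} : Omega x -> 0 < xlast x.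
Proof. by case=> _ []. Qed.

Lemma Omega_xlast_lt {x} : Omega x -> xlast x < 1 - sqnorm' x.
Proof. by case=> _ []. Qed.

Lemma Omega_sqnorm'_lt1 {x} : Omega x -> 0 < 1 - sqnorm' x.
Proof. by move=> Ox; exact: lt_trans (Omega_xlast_gt0 Ox) (Omega_xlast_lt Ox). Qed.

Lemma OmegaE : Omega = @xlast R m.+1 @^-1` [set r | 0 < r] `&`
  (fun y => 1 - sqnorm' y - xlast y) @^-1` [set r | 0 < r].
Proof.
apply/seteqP; split => [y [_ [y0 ys]]|y /= [y0]]; rewrite /= subr_gt0 //.
by move=> ys; split => //; rewrite -subr_gt0; exact: lt_trans ys.
Qed.

Lemma xlast_continuous : continuous (@xlast R m.+1).
Proof. by move=> y; apply: differentiable_continuous; case: (is_dderive_xlast y 0). Qed.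

Lemma Omega_gap_continuous : continuous (fun y : V => 1 - sqnorm' y - xlast y).
Proof.
move=> y; apply: differentiable_continuous.
exact: differentiableB (is_dderive_one_sub_sqnorm' y 0).1 (is_dderive_xlast y 0).1.
Qed.

Lemma open_Omega : open Omega.
Proof.
rewrite OmegaE; apply: openI; apply: open_comp => [y _|];
  by [exact: xlast_continuous | exact: Omega_gap_continuous | exact: open_gt].
Qed.

Lemma Omega_nbhs {x} : Omega x -> \forall y \near x, Omega y.
Proof. by move=> Ox; apply: open_nbhs_nbhs; split => //; exact: open_Omega. Qed.

Lemma closure_Omega {x} : closure Omega x -> 0 <= xlast x <= 1 - sqnorm' x.
Proof.
pose K := @xlast R m.+1 @^-1` [set r | 0 <= r] `&`
  (fun y => 1 - sqnorm' y - xlast y) @^-1` [set r | 0 <= r].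
have closedK : closed K.
  by apply: closedI; apply: preimage_closed => [y _|];
    by [exact: xlast_continuous | exact: Omega_gap_continuous | exact: closed_ge].
have OmegaK : Omega `<=` K by rewrite OmegaE => y [/ltW y0 /ltW ys].
move=> /(closureS OmegaK); rewrite -(closure_id K).1 // => -[/= -> ys].
by rewrite -subr_ge0.
Qed.

Inductive Omega_algebra : (V -> R) -> Prop :=
| alg_cst c : Omega_algebra (fun=> c)
| alg_coord i : Omega_algebra (fun y => y ord0 i)
| alg_xlast_powR a : Omega_algebra (fun y => xlast y `^ a)
| alg_sqnorm'_powR b : Omega_algebra (fun y => (1 - sqnorm' y) `^ b)
| algD f g : Omega_algebra f -> Omega_algebra g ->
    Omega_algebra (fun y => f y + g y)
| algM f g : Omega_algebra f -> Omega_algebra g ->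
    Omega_algebra (fun y => f y * g y)
| alg_eq_on f g : Omega_algebra f -> (forall y, Omega y -> f y = g y) ->
    Omega_algebra g.
Arguments algD {f g}. Arguments algM {f g}. Arguments alg_eq_on {f g}.

Lemma Omega_algebra_differentiable f x : Omega_algebra f -> Omega x ->
  differentiable f x.
Proof.
move=> alg_f; elim: alg_f x => {f}
  [c|i|a|b|f g _ IHf _ IHg|f g _ IHf _ IHg|f g _ IHf fg] x Ox.
- exact: differentiable_cst.
- exact: (is_dderive_coord x 0 i).1.
- exact: (is_dderive_powR a (is_dderive_xlast x 0) (Omega_xlast_gt0 Ox)).1.
- exact: (is_dderive_powR b (is_dderive_one_sub_sqnorm' x 0) (Omega_sqnorm'_lt1 Ox)).1.
- exact: differentiableD (IHf x Ox) (IHg x Ox).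
- exact: differentiableM (IHf x Ox) (IHg x Ox).
- apply: near_eq_differentiable (IHf x Ox).
  by near=> y; apply: fg; near: y; exact: Omega_nbhs.
Unshelve. all: by end_near. Qed.

Lemma Omega_algebra_is_dderive {f x} v : Omega_algebra f -> Omega x ->
  is_dderive x v f ('D_v f x).
Proof. by move=> alg_f Ox; split => //; exact: Omega_algebra_differentiable. Qed.

Lemma Omega_algebra_sum {I : Type} (r : seq I) (P : pred I) {F : I -> V -> R} :
  (forall i, Omega_algebra (F i)) ->
  Omega_algebra (fun y => \sum_(i <- r | P i) F i y).
Proof.
move=> alg_F; elim: r => [|i r IH].
  by apply: (alg_eq_on (alg_cst 0)) => y _; rewrite big_nil.
have [Pi|nPi] := boolP (P i).
  by apply: (alg_eq_on (algD (alg_F i) IH)) => y _; rewrite big_cons Pi.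
by apply: (alg_eq_on IH) => y _; rewrite big_cons (negbTE nPi).
Qed.

Lemma Omega_algebra_derive f v : Omega_algebra f -> Omega_algebra ('D_v f).
Proof.
move=> alg_f; elim: alg_f => {f}
  [c|i|a|b|f g af IHf ag IHg|f g af IHf ag IHg|f g _ IHf fg].
- by apply: (alg_eq_on (alg_cst 0)) => y _; rewrite derive_cst.
- apply: (alg_eq_on (alg_cst (v ord0 i))) => y _.
  by rewrite (is_dderive_coord y v i).2.
- apply: (alg_eq_on (algM (algM (alg_cst a) (alg_xlast_powR (a - 1)))
    (alg_cst (xlast v)))) => y Oy.
  by rewrite (is_dderive_powR a (is_dderive_xlast y v) (Omega_xlast_gt0 Oy)).2.
- have alg_dot : Omega_algebra (fun y => - (2 * dot' y v)).
  apply: (alg_eq_on (algM (alg_cst (-2)) (Omega_algebra_sum (index_enum 'I_m.+1)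
    (fun i => (i < m)%N) (fun i => algM (alg_coord i) (alg_cst (v ord0 i)))))).
    by move=> y _; rewrite mulNr.
  apply: (alg_eq_on (algM (algM (alg_cst b) (alg_sqnorm'_powR (b - 1))) alg_dot)).
  move=> y Oy; have Sy := Omega_sqnorm'_lt1 Oy.
  by rewrite (is_dderive_powR b (is_dderive_one_sub_sqnorm' y v) Sy).2.
- apply: (alg_eq_on (algD IHf IHg)) => y Oy.
  by rewrite (is_dderiveD (Omega_algebra_is_dderive v af Oy)
    (Omega_algebra_is_dderive v ag Oy)).2.
- apply: (alg_eq_on (algD (algM af IHg) (algM ag IHf))) => y Oy.
  by rewrite (is_dderiveM (Omega_algebra_is_dderive v af Oy)
    (Omega_algebra_is_dderive v ag Oy)).2.
- apply: (alg_eq_on IHf) => y Oy; apply: near_eq_derive.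
  by near=> z; apply: fg; near: z; exact: Omega_nbhs.
Unshelve. all: by end_near. Qed.

Lemma Omega_algebra_smooth f : Omega_algebra f -> smooth_on Omega f.
Proof.
move=> alg_f vs x Ox; apply: Omega_algebra_differentiable Ox.
by elim: vs => //= v vs IH; exact: Omega_algebra_derive.
Qed.

Definition wab (a b C : R) x :=
  C * xlast x - C * xlast x `^ a * (1 - sqnorm' x) `^ b.

Lemma Omega_algebra_wab a b C : Omega_algebra (wab a b C).
Proof.
have alg_xlast : Omega_algebra (@xlast R m.+1).
  by apply: (alg_eq_on (alg_coord ord_max)) => y _; rewrite xlastE.
apply: (alg_eq_on (algD (algM (alg_cst C) alg_xlast)
  (algM (algM (alg_cst (- C)) (alg_xlast_powR a)) (alg_sqnorm'_powR b)))).
by move=> y _; rewrite /wab !mulNr.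
Qed.

Definition geomean (a b : R) x := xlast x `^ a * (1 - sqnorm' x) `^ b.

Lemma wabE a b C x : wab a b C x = C * xlast x - C * geomean a b x.
Proof. by rewrite /wab /geomean mulrA. Qed.

Lemma xlast_comb (l : R) x y :
  xlast (l *: x + (1 - l) *: y) = l * xlast x + (1 - l) * xlast y.
Proof. by rewrite !xlastE !mxE. Qed.

Lemma sqnorm'_convex (l : R) x y : 0 <= l <= 1 ->
  sqnorm' (l *: x + (1 - l) *: y) <= l * sqnorm' x + (1 - l) * sqnorm' y.
Proof.
move=> /andP[l0 l1]; rewrite /sqnorm' !mulr_sumr -big_split /=.
apply: ler_sum => i _; rewrite !mxE -subr_ge0.
have -> : forall u v : R, l * u ^+ 2 + (1 - l) * v ^+ 2 - (l * u + (1 - l) * v) ^+ 2 =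
  l * (1 - l) * (u - v) ^+ 2 by move=> u v; ring.
by rewrite mulr_ge0 ?sqr_ge0 // mulr_ge0 // subr_ge0.
Qed.

Lemma geomean_concave_on_Omega {a b l : R} {x y} : 0 < a -> 0 < b -> a + b = 1 ->
  0 <= l <= 1 -> Omega x -> Omega y ->
  l * geomean a b x + (1 - l) * geomean a b y <=
  geomean a b (l *: x + (1 - l) *: y).
Proof.
move=> a0 b0 ab l01 Ox Oy; rewrite /geomean xlast_comb.
apply: le_trans (geomean_concave a0 b0 ab l01 (Omega_xlast_gt0 Ox)
  (Omega_sqnorm'_lt1 Ox) (Omega_xlast_gt0 Oy) (Omega_sqnorm'_lt1 Oy)) _.
rewrite ler_wpM2l ?powR_ge0 //.
have S0 := convex_comb_gt0 l01 (Omega_sqnorm'_lt1 Ox) (Omega_sqnorm'_lt1 Oy).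
have le_S := sqnorm'_convex l x y l01.
by apply: (ge0_ler_powR (ltW b0)); rewrite ?nnegrE; [exact: ltW | lra | lra].
Qed.

Lemma convex_on_wab a b C : 0 <= C -> 0 < a -> 0 < b -> a + b = 1 ->
  convex_on Omega (wab a b C).
Proof.
move=> C0 a0 b0 ab x y l Ox Oy l01; rewrite !wabE xlast_comb.
have := ler_wpM2l C0 (geomean_concave_on_Omega a0 b0 ab l01 Ox Oy).
lra.
Qed.

Lemma wab_bdry a b C x : a != 0 -> a + b = 1 -> bdry Omega x -> wab a b C x = 0.
Proof.
move=> a0 ab [/closure_Omega/andP[t0 ts] not_int].
have notO : ~ Omega x.
  by move=> Ox; apply: not_int; rewrite (interior_id _).1 //; exact: open_Omega.
rewrite /wab; have [->|tn0] := eqVneq (xlast x) 0.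
  by rewrite powR0 // mulr0 mul0r subrr.
have tpos : 0 < xlast x by rewrite lt_neqAle eq_sym tn0.
have <- : xlast x = 1 - sqnorm' x.
  apply/eqP; rewrite eq_le ts leNgt; apply/negP => tlt; apply: notO.
  split; last by split.
  by rewrite -subr_gt0; exact: lt_trans tpos tlt.
rewrite -mulrA -powRD; last by rewrite ab oner_eq0.
by rewrite ab powRr1 ?subrr // ltW.
Qed.

Definition dwab (a b C : R) v y :=
  C * xlast v - C * (xlast y `^ a * (b * (1 - sqnorm' y) `^ (b - 1) * - (2 * dot' y v))
    + (1 - sqnorm' y) `^ b * (a * xlast y `^ (a - 1) * xlast v)).

Lemma is_dderive_wab a b C y v : Omega y -> is_dderive y v (wab a b C) (dwab a b C v y).
Proof.
move=> Oy; apply: (is_dderive_eq (is_dderiveD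
  (is_dderiveM (is_dderive_cst y v C) (is_dderive_xlast y v))
  (is_dderiveM (is_dderiveM (is_dderive_cst y v (- C))
      (is_dderive_powR a (is_dderive_xlast y v) (Omega_xlast_gt0 Oy)))
    (is_dderive_powR b (is_dderive_one_sub_sqnorm' y v) (Omega_sqnorm'_lt1 Oy)))))
  => [z|]; by rewrite /wab /dwab; ring.
Qed.

Definition dlog_ratio x u := xlast u / xlast x + 2 * dot' x u / (1 - sqnorm' x).

Lemma derive2_wab a b C x u v : a + b = 1 -> Omega x ->
  'D_u ('D_v (wab a b C)) x =
  C * geomean a b x * a * b * dlog_ratio x u * dlog_ratio x v +
  2 * b * C * geomean a b x / (1 - sqnorm' x) * dot' u v.
Proof.
move=> ab Ox.
have dw_near : \forall y \near x, 'D_v (wab a b C) y = dwab a b C v y.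
  by near=> y; apply: (is_dderive_wab a b C y v _).2; near: y; exact: Omega_nbhs.
have t0 := Omega_xlast_gt0 Ox; have s0 := Omega_sqnorm'_lt1 Ox.
have dta := is_dderive_powR a (is_dderive_xlast x u) t0.
have dta1 := is_dderive_powR (a - 1) (is_dderive_xlast x u) t0.
have dsb := is_dderive_powR b (is_dderive_one_sub_sqnorm' x u) s0.
have dsb1 := is_dderive_powR (b - 1) (is_dderive_one_sub_sqnorm' x u) s0.
rewrite (near_eq_derive u dw_near) (is_dderive_eq (is_dderiveD
  (is_dderive_cst x u (C * xlast v)) (is_dderiveM (is_dderive_cst x u (- C))
   (is_dderiveD
     (is_dderiveM dta (is_dderiveM (is_dderiveM (is_dderive_cst x u b) dsb1)
       (is_dderiveM (is_dderive_cst x u (-2)) (is_dderive_dot'l x u v))))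
     (is_dderiveM dsb (is_dderiveM (is_dderiveM (is_dderive_cst x u a) dta1)
       (is_dderive_cst x u (xlast v))))))) _ erefl).2; last first.
  by move=> y; rewrite /dwab; ring.
rewrite /geomean /dlog_ratio !(powRB1 _ _ t0) !(powRB1 _ _ s0) -[b](addKr a) ab.
by field; rewrite !gt_eqF.
Unshelve. all: by end_near. Qed.

Lemma xlast_evec i : xlast (evec R i : V) = (i == ord_max)%:R.
Proof. by rewrite xlastE /evec mxE eqxx eq_sym. Qed.

Lemma dot'_evec i j : dot' (evec R i) (evec R j) = pid_mx m i j.
Proof.
rewrite /dot' big_mkcond (bigD1 i) //= big1 ?addr0 => [|k /negbTE ki]; last first.
  by case: ifP; rewrite // !mxE ki andbF mul0r.
rewrite !mxE !eqxx /=.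
by case: (i < m)%N; rewrite ?mul1r ?andbT ?andbF.
Qed.

Lemma dlog_ratio_evec_max x : dlog_ratio x (evec R ord_max) = (xlast x)^-1.
Proof.
rewrite /dlog_ratio xlast_evec eqxx mul1r /dot' big1 ?mulr0 ?mul0r ?addr0 // => i.
by rewrite !mxE eqxx -val_eqE /= => /ltn_eqF ->; rewrite mulr0.
Qed.

Definition grad_log_ratio x : 'rV[R]_m.+1 := \row_i dlog_ratio x (evec R i).

Lemma hessian_wabE a b C x : a + b = 1 -> Omega x ->
  hessian (wab a b C) x =
  (C * geomean a b x * a * b) *: ((grad_log_ratio x)^T *m grad_log_ratio x) +
  (2 * b * C * geomean a b x / (1 - sqnorm' x)) *: pid_mx m.
Proof.
move=> ab Ox; apply/matrixP => i j.
by rewrite [LHS]mxE derive2_wab // dot'_evec !mxE big_ord1 !mxE mulrA.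
Qed.

Lemma det_hessian_wab a b C x : a + b = 1 -> Omega x ->
  \det (hessian (wab a b C) x) =
  (2 * b * C * geomean a b x / (1 - sqnorm' x)) ^+ m *
  (C * geomean a b x * a * b) / xlast x ^+ 2.
Proof.
move=> ab Ox.
by rewrite hessian_wabE // det_rank1_add_pid mxE dlog_ratio_evec_max exprVn.
Qed.

Lemma Omega_xlast_lt_geomean {a b x} : 0 < a -> 0 < b -> a + b = 1 -> Omega x ->
  xlast x < geomean a b x.
Proof.
move=> a0 b0 ab Ox; have t0 := Omega_xlast_gt0 Ox.
have {1}-> : xlast x = xlast x `^ a * xlast x `^ b.
  by rewrite -powRD ?ab ?powRr1 ?oner_eq0 ?ltW.
rewrite /geomean ltr_pM2l ?powR_gt0 //; apply: gt0_ltr_powR => //.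
- by rewrite nnegrE ltW.
- by rewrite nnegrE ltW // Omega_sqnorm'_lt1.
- exact: Omega_xlast_lt.
Qed.

Lemma normr_wab {a b C x} : 0 < a -> 0 < b -> a + b = 1 -> 0 <= C -> Omega x ->
  `|wab a b C x| = C * (geomean a b x - xlast x).
Proof.
move=> a0 b0 ab C0 Ox; rewrite wabE -mulrBr normrM ger0_norm // distrC.
by rewrite ger0_norm // subr_ge0 ltW // Omega_xlast_lt_geomean.
Qed.

Lemma det_hessian_wab_mul_powR {p a b C x} : 0 <= p -> 0 <= C -> a + b = 1 ->
  a * (m.+1%:R + p) = 2 -> b * (m.+1%:R + p) = m%:R + (p - 1) -> Omega x ->
  \det (hessian (wab a b C) x) * (C * geomean a b x) `^ p =
  C ^+ m * C `^ p * (1 - sqnorm' x) `^ (p - 1) * (C * ((2 * b) ^+ m * a * b)).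
Proof.
move=> p0 C0 ab aN bN Ox.
have t0 := Omega_xlast_gt0 Ox; have s0 := Omega_sqnorm'_lt1 Ox.
have key : geomean a b x ^+ m * geomean a b x * geomean a b x `^ p =
    xlast x ^+ 2 * ((1 - sqnorm' x) ^+ m * (1 - sqnorm' x) `^ (p - 1)).
  by rewrite -exprSr; exact: geomean_pow_sum.
have Q0 : 0 <= geomean a b x by rewrite mulr_ge0 ?powR_ge0.
have sm0 : (1 - sqnorm' x) ^+ m != 0 by rewrite expf_neq0 // gt_eqF.
rewrite det_hessian_wab // (powRM p C0 Q0); move: (geomean a b x) key => q key.
rewrite expr_div_n !exprMn.
move: (C ^+ m) (2 ^+ m) (b ^+ m) (C `^ p) (q ^+ m) (q `^ p) ((1 - sqnorm' x) ^+ m) sm0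
  ((1 - sqnorm' x) `^ (p - 1)) key => cm tm bm cp qm qp sm sm0 sp key.
transitivity (cm * cp * (C * (tm * bm * a * b)) * (qm * q * qp) / (sm * xlast x ^+ 2)).
  by field; rewrite sm0 gt_eqF.
by rewrite key; field; rewrite sm0 gt_eqF.
Qed.

Lemma det_hessian_wab_le p a b C x : 1 <= p -> 0 < a -> 0 < b -> a + b = 1 ->
  a * (m.+1%:R + p) = 2 -> b * (m.+1%:R + p) = m%:R + (p - 1) ->
  0 < C <= 1 -> C * ((2 * b) ^+ m * a * b) <= 1 -> Omega x ->
  \det (hessian (wab a b C) x) <= `|wab a b C x| `^ (- p).
Proof.
move=> p1 a0 b0 ab aN bN /andP[C0 C1] CK Ox.
have p0 : 0 <= p := le_trans ler01 p1.
have tQ := Omega_xlast_lt_geomean a0 b0 ab Ox.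
have Q0 : 0 < geomean a b x := lt_trans (Omega_xlast_gt0 Ox) tQ.
have CQ0 : 0 < (C * geomean a b x) `^ p by apply: powR_gt0; rewrite mulr_gt0.
apply: (@le_trans _ _ ((C * geomean a b x) `^ (- p))).
  rewrite powRN -div1r ler_pdivlMr //.
  rewrite (det_hessian_wab_mul_powR p0 (ltW C0) ab aN bN Ox).
  have s01 : 0 < 1 - sqnorm' x <= 1.
    by rewrite Omega_sqnorm'_lt1 // gerBl sqnorm'_ge0.
  have Cm1 : C ^+ m <= 1 := exprn_ile1 m (ltW C0) C1.
  have Cp1 : C `^ p <= 1 by apply: powR_ile1; rewrite ?C0.
  have sp1 : (1 - sqnorm' x) `^ (p - 1) <= 1 by apply: powR_ile1; rewrite ?subr_ge0.
  have K0 : 0 <= C * ((2 * b) ^+ m * a * b).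
    by rewrite ltW // !mulr_gt0 // exprn_gt0 // mulr_gt0.
  have Cm0 : 0 <= C ^+ m by rewrite exprn_ge0 // ltW.
  apply: mulr_ile1 => //; rewrite ?mulr_ge0 ?powR_ge0 //.
  apply: mulr_ile1 => //; rewrite ?mulr_ge0 ?powR_ge0 //.
  exact: mulr_ile1 Cm0 (powR_ge0 _ _) Cm1 Cp1.
have w0 : 0 < (C * (geomean a b x - xlast x)) `^ p.
  by apply: powR_gt0; rewrite mulr_gt0 // subr_gt0.
rewrite (normr_wab a0 b0 ab (ltW C0) Ox) !powRN lef_pV2 ?posrE //.
apply: (ge0_ler_powR p0); rewrite ?nnegrE.
- by rewrite mulr_ge0 ?subr_ge0 // ltW.
- by rewrite mulr_ge0 // ltW.
- by rewrite ler_pM2l // gerBl ltW // Omega_xlast_gt0.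
Qed.

End OmegaCalculus.

Theorem lemma2p4 (R : realType) (n : nat) (p : R) :
  (2 <= n)%N -> 1 <= p ->
  exists C : R, 0 < C /\
    smooth_on (@Omega R n) (@wfun R n p C) /\
    convex_on (@Omega R n) (@wfun R n p C) /\
    (forall x, @Omega R n x ->
       \det (hessian (@wfun R n p C) x) <= `|@wfun R n p C x| `^ (- p)) /\
    (forall x, bdry (@Omega R n) x -> @wfun R n p C x = 0).
Proof.
case: n => [//|m] m_gt0 p1.
pose N := m.+1%:R + p; pose a := 2 / N; pose b := (N - 2) / N.
have N_gt2 : 2 < N by rewrite /N; have := ler_nat R 2 m.+1; rewrite m_gt0; lra.
have N_neq0 : N != 0 by rewrite gt_eqF //; lra.
have a0 : 0 < a by rewrite divr_gt0 //; lra.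
have b0 : 0 < b by rewrite divr_gt0 //; lra.
have aN : a * N = 2 by rewrite divfK.
have bN : b * N = m%:R + (p - 1) by rewrite divfK // /N -natr1; ring.
have ab : a + b = 1 by rewrite -mulrDl addrC subrK divff.
pose K := (2 * b) ^+ m * a * b.
have K0 : 0 < K.
  by do 2!apply: mulr_gt0 => //; apply/exprn_gt0/mulr_gt0.
pose C := (1 + K)^-1.
have C01 : 0 < C <= 1 by rewrite invr_gt0 invf_le1; lra.
have CK : C * K <= 1 by rewrite mulrC ler_pdivrMr; lra.
exists C; have -> : @wfun R m.+1 p C = wab a b C by [].
split; first by case/andP: C01.
split; first exact/Omega_algebra_smooth/Omega_algebra_wab.
split; first by apply: convex_on_wab => //; case/andP: C01 => /ltW.
split; first by move=> x; exact: det_hessian_wab_le.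
by move=> x; apply: wab_bdry; rewrite ?gt_eqF.
Qed.
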